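(* Let $x, y \in \mathbb{Z}$, let $S$ be a finite set of functions $f_i(z) = a_i z + b_i$ with $a_i, b_i \in \mathbb{Z}$ and $a_i \ne 0$, let $k \in \mathbb{Z}\setminus\{0\}$ and $g(z) = z + k$, and put $F = S \cup \{g\}$ and $\mathbf{G} = \{ G : G \text{ is an } S\text{-composition with } G(x) \equiv y \pmod k\}$. Then: (A) If $\mathbf{G} = \emptyset$, then $x \not\xrightarrow{F} y$. (B) If some $G \in \mathbf{G}$ satisfies $\operatorname{sgn}(G(x) - y) \ne \operatorname{sgn}(k)$, then $x \xrightarrow{F} y$. (C) If some $G \in \mathbf{G}$, written $G = f_{e_0} \circ \cdots \circ f_{e_K}$ with $f_{e_i} \in S$, has $a_{e_j} < 0$ for some $j$, then $x \xrightarrow{F} y$. (D) If none of the hypotheses of (A), (B), (C) hold, then $x \not\xrightarrow{F} y$.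
   Context: For a set $S$ of affine functions $\mathbb{Z}\to\mathbb{Z}$, an $S$-composition is a finite tuple $(s_1,\dots,s_K)$ with $K \ge 0$ and each $s_i \in S$, identified with the function $s_K \circ \dots \circ s_1$ (the empty tuple being the identity). We write $x \xrightarrow{S} y$ if there exists an $S$-composition $G$ with $G(x) = y$. $\operatorname{sgn}$ denotes the sign function with values in $\{-1,0,1\}$. *)

From Stdlib Require Import ZArith List.
Import ListNotations.
Open Scope Z_scope.

Definition aff : Type := (Z * Z)%type.

Definition aff_apply (f : aff) (z : Z) : Z := fst f * z + snd f.

(* The composition (s_1, ..., s_K) is identified with s_K o ... o s_1;
   the empty list is the identity. *)
Definition comp_apply (c : list aff) (x : Z) : Z :=
  fold_left (fun z f => aff_apply f z) c x.

Definition is_comp (S : list aff) (c : list aff) : Prop :=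
  Forall (fun f => In f S) c.

Definition reaches (S : list aff) (x y : Z) : Prop :=
  exists c, is_comp S c /\ comp_apply c x = y.

From Stdlib Require Import ZArith List Lia Bool.
Import ListNotations.
Open Scope Z_scope.

(* Write g = (1, k) for the shift z |-> z + k and F = g :: S.
   Every composition c is affine, with slope the product of its coefficients
   [a]; translating its argument by d translates its value by d * slope c.
   Hence deleting the shifts from an F-composition c leaves an S-composition
   [drop_shifts k c] whose value differs from c(x) by a multiple k * N of k,
   and N >= 0 as soon as all remaining coefficients are positive.
   - (A) and (D): if x -F-> y via c, then [drop_shifts k c] lies in G, and
     under the hypotheses of (D) its value minus y is -(k N) with N >= 0,
     whose sign is never sgn k.
   - (B): appending shifts to an F-composition with G(x) - y = k m, m <= 0,
     reaches y.
   - (C): inserting t shifts just before the last negative coefficient a_f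
     changes the value by t k (slope of the tail from f on) where that slope
     is <= -1; for t = |m| this brings us back to the situation of (B). *)

Lemma comp_apply_cons (f : aff) (c : list aff) (z : Z) :
  comp_apply (f :: c) z = comp_apply c (aff_apply f z).
Proof. reflexivity. Qed.

Lemma comp_apply_app (c1 c2 : list aff) (z : Z) :
  comp_apply (c1 ++ c2) z = comp_apply c2 (comp_apply c1 z).
Proof. apply fold_left_app. Qed.

Definition slope (c : list aff) : Z := fold_right (fun f p => fst f * p) 1 c.

Lemma comp_apply_translate (c : list aff) (z d : Z) :
  comp_apply c (z + d) = comp_apply c z + d * slope c.
Proof.
  revert z d; induction c as [|f c IH]; intros z d; [unfold comp_apply, slope; cbn; ring|].
  rewrite !comp_apply_cons; change (slope (f :: c)) with (fst f * slope c).
  replace (aff_apply f (z + d)) with (aff_apply f z + d * fst f)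
    by (unfold aff_apply; ring).
  rewrite IH; ring.
Qed.

Lemma slope_pos (c : list aff) : Forall (fun f => 0 < fst f) c -> 0 < slope c.
Proof. induction 1 as [|f c Hf _ IH]; [cbn; lia|]. change (slope (f :: c)) with (fst f * slope c); nia. Qed.

Definition shifts (k : Z) (n : nat) : list aff := repeat (1, k) n.

Lemma comp_apply_shifts (k : Z) (n : nat) (z : Z) :
  comp_apply (shifts k n) z = z + Z.of_nat n * k.
Proof.
  revert z; induction n as [|n IH]; intros z; [unfold comp_apply; cbn; ring|].
  change (shifts k (S n)) with ((1, k) :: shifts k n).
  rewrite comp_apply_cons, IH, Nat2Z.inj_succ; unfold aff_apply; cbn [fst snd]; lia.
Qed.

Lemma comp_apply_insert_shifts (k : Z) (n : nat) (c1 c2 : list aff) (z : Z) :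
  comp_apply (c1 ++ shifts k n ++ c2) z
  = comp_apply (c1 ++ c2) z + Z.of_nat n * k * slope c2.
Proof.
  rewrite !comp_apply_app, comp_apply_shifts, comp_apply_translate; ring.
Qed.

Lemma is_comp_app (S : list aff) (c1 c2 : list aff) :
  is_comp S c1 -> is_comp S c2 -> is_comp S (c1 ++ c2).
Proof. intros; apply Forall_app; auto. Qed.

Lemma is_comp_extend (S : list aff) (g : aff) (c : list aff) :
  is_comp S c -> is_comp (g :: S) c.
Proof. apply Forall_impl; intros f Hf; now right. Qed.

Lemma is_comp_shifts (S : list aff) (k : Z) (n : nat) :
  is_comp ((1, k) :: S) (shifts k n).
Proof.
  apply Forall_forall; intros f Hf; apply repeat_spec in Hf; now left.
Qed.

Lemma is_comp_app_inv (S : list aff) (c1 c2 : list aff) :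
  is_comp S (c1 ++ c2) -> is_comp S c1 /\ is_comp S c2.
Proof. apply Forall_app. Qed.

Lemma coeffs_pos (S : list aff) (hS : forall f, In f S -> fst f <> 0) (c : list aff) :
  is_comp S c -> Forall (fun f => ~ fst f < 0) c -> Forall (fun f => 0 < fst f) c.
Proof.
  intros Hc Hnonneg; apply Forall_forall; intros f Hf.
  pose proof (hS f (proj1 (Forall_forall _ _) Hc f Hf)).
  pose proof (proj1 (Forall_forall _ _) Hnonneg f Hf); cbv beta in *; lia.
Qed.

Definition is_shift (k : Z) (f : aff) : bool := (fst f =? 1) && (snd f =? k).

Definition drop_shifts (k : Z) (c : list aff) : list aff :=
  filter (fun f => negb (is_shift k f)) c.

Lemma is_comp_drop_shifts (S : list aff) (k : Z) (c : list aff) :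
  is_comp ((1, k) :: S) c -> is_comp S (drop_shifts k c).
Proof.
  intros Hc; apply Forall_forall; intros f Hf.
  apply filter_In in Hf as [Hin Hnot].
  destruct (proj1 (Forall_forall _ _) Hc f Hin) as [<-|HS]; [|exact HS].
  unfold is_shift in Hnot; cbn in Hnot; rewrite !Z.eqb_refl in Hnot; discriminate.
Qed.

(* Each deleted shift contributed k times the slope of what follows it, so
   c and [drop_shifts k c] differ by a multiple of k, a nonnegative one when
   the remaining slopes are positive. *)
Lemma drop_shifts_spec (k : Z) (c : list aff) (z : Z) :
  exists N, comp_apply c z = comp_apply (drop_shifts k c) z + k * N /\
    (Forall (fun f => 0 < fst f) (drop_shifts k c) -> 0 <= N).
Proof.
  revert z; induction c as [|f c IH]; intros z; [exists 0; cbn; split; lia|].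
  unfold drop_shifts; cbn [filter]; fold (drop_shifts k c).
  destruct (is_shift k f) eqn:Hf; cbn [negb].
  - apply andb_true_iff in Hf as [Ha Hb]; apply Z.eqb_eq in Ha, Hb.
    destruct (IH (z + k)) as [N [HN Hpos]].
    exists (N + slope (drop_shifts k c)); split.
    + rewrite comp_apply_cons.
      replace (aff_apply f z) with (z + k) by (unfold aff_apply; rewrite Ha, Hb; ring).
      rewrite HN, comp_apply_translate; ring.
    + intros Hc; specialize (Hpos Hc); pose proof (slope_pos _ Hc); lia.
  - destruct (IH (aff_apply f z)) as [N [HN Hpos]].
    exists N; split; [exact HN|].
    intros Hc; inversion Hc; auto.
Qed.

Lemma split_at_last {A : Type} (P : A -> Prop)
  (P_dec : forall a, {P a} + {~ P a}) (l : list A) :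
  (exists a, In a l /\ P a) ->
  exists l1 a l2, l = l1 ++ a :: l2 /\ P a /\ Forall (fun b => ~ P b) l2.
Proof.
  induction l as [|b l IH] using rev_ind; intros [a [Hin Ha]]; [destruct Hin|].
  destruct (P_dec b) as [Hb|Hb].
  - exists l, b, []; auto.
  - apply in_app_or in Hin as [Hin|[<-|[]]]; [|contradiction].
    destruct (IH (ex_intro _ a (conj Hin Ha))) as [l1 [a' [l2 [-> [Ha' Hl2]]]]].
    exists l1, a', (l2 ++ [b]); rewrite <- app_assoc; repeat split; auto.
    apply Forall_app; auto.
Qed.

Lemma sgn_mul_eq_iff (k m : Z) : k <> 0 -> (Z.sgn (k * m) = Z.sgn k <-> 0 < m).
Proof.
  intros hk; rewrite Z.sgn_mul.
  destruct (Z.lt_trichotomy m 0) as [Hm|[->|Hm]].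
  - rewrite (proj2 (Z.sgn_neg_iff m) Hm).
    destruct (Z.lt_trichotomy k 0) as [Hk|[->|Hk]];
      [rewrite (proj2 (Z.sgn_neg_iff k) Hk)| |rewrite (proj2 (Z.sgn_pos_iff k) Hk)];
      lia.
  - destruct (Z.lt_trichotomy k 0) as [Hk|[->|Hk]];
      [rewrite (proj2 (Z.sgn_neg_iff k) Hk)| |rewrite (proj2 (Z.sgn_pos_iff k) Hk)];
      cbn; lia.
  - rewrite (proj2 (Z.sgn_pos_iff m) Hm); lia.
Qed.

Section Reachability.

Variables (x y k : Z) (S : list aff).

Lemma reaches_drop_shifts :
  reaches ((1, k) :: S) x y ->
  exists G N, is_comp S G /\ comp_apply G x - y = - (k * N) /\
    (Forall (fun f => 0 < fst f) G -> 0 <= N).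
Proof.
  intros [c [Hc Hy]].
  destruct (drop_shifts_spec k c x) as [N [HN Hpos]].
  exists (drop_shifts k c), N; repeat split; auto using is_comp_drop_shifts; lia.
Qed.

Lemma reaches_of_gap (G : list aff) (m : Z) :
  is_comp ((1, k) :: S) G -> comp_apply G x - y = k * m -> m <= 0 ->
  reaches ((1, k) :: S) x y.
Proof.
  intros HG Hm Hle.
  exists (G ++ shifts k (Z.to_nat (- m))); split.
  - apply is_comp_app; auto using is_comp_shifts.
  - rewrite comp_apply_app, comp_apply_shifts, Z2Nat.id; lia.
Qed.

(* Shifts inserted before a tail of negative slope turn any gap into a
   nonpositive multiple of k. *)
Lemma reaches_of_negative_tail (c1 : list aff) (f : aff) (c2 : list aff) (m : Z) :
  is_comp S (c1 ++ f :: c2) -> comp_apply (c1 ++ f :: c2) x - y = k * m ->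
  slope (f :: c2) < 0 -> reaches ((1, k) :: S) x y.
Proof.
  intros HG Hm Hneg.
  set (t := Z.abs m).
  apply (reaches_of_gap (c1 ++ shifts k (Z.to_nat t) ++ f :: c2)
           (m + t * slope (f :: c2))).
  - apply is_comp_app_inv in HG as [H1 H2].
    apply is_comp_app; [|apply is_comp_app]; auto using is_comp_extend, is_comp_shifts.
  - rewrite comp_apply_insert_shifts, Z2Nat.id by lia; lia.
  - unfold t; nia.
Qed.

End Reachability.

Theorem mainTheorem4 (x y k : Z) (S : list aff)
  (hS : forall f, In f S -> fst f <> 0) (hk : k <> 0) :
  let F := (1, k) :: S in
  let inG := fun G : list aff => is_comp S G /\ (k | comp_apply G x - y) in
  (* (A) *)
  ((~ exists G, inG G) -> ~ reaches F x y) /\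
  (* (B) *)
  ((exists G, inG G /\ Z.sgn (comp_apply G x - y) <> Z.sgn k) -> reaches F x y) /\
  (* (C) *)
  ((exists G, inG G /\ exists f, In f G /\ fst f < 0) -> reaches F x y) /\
  (* (D) *)
  ((exists G, inG G) ->
   (forall G, inG G -> Z.sgn (comp_apply G x - y) = Z.sgn k) ->
   (forall G, inG G -> forall f, In f G -> ~ fst f < 0) ->
   ~ reaches F x y).
Proof.
  intros F inG; repeat split.
  - intros Hempty Hreach.
    destruct (reaches_drop_shifts x y k S Hreach) as [G [N [HG [HN _]]]].
    apply Hempty; exists G; split; [exact HG|exists (- N); lia].
  - intros [G [[HG [m Hm]] Hsgn]].
    apply (reaches_of_gap x y k S G m); auto using is_comp_extend; [lia|].
    apply Z.nlt_ge; intros Hpos; apply Hsgn.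
    rewrite Hm, Z.mul_comm; now apply sgn_mul_eq_iff.
  - intros [G [[HG [m Hm]] Hex]].
    destruct (split_at_last (fun f : aff => fst f < 0) (fun f => Z_lt_dec (fst f) 0) G Hex)
      as [c1 [f [c2 [-> [Hf Hc2]]]]].
    apply (reaches_of_negative_tail x y k S c1 f c2 m HG); [lia|].
    apply is_comp_app_inv in HG as [_ HG]; inversion HG as [|? ? _ Hc2S].
    pose proof (slope_pos c2 (coeffs_pos S hS c2 Hc2S Hc2)).
    change (slope (f :: c2)) with (fst f * slope c2); nia.
  - intros _ Hsgn Hnoneg Hreach.
    destruct (reaches_drop_shifts x y k S Hreach) as [G [N [HG [HN Hpos]]]].
    assert (HinG : inG G) by (split; [exact HG|exists (- N); lia]).
    assert (HN0 : 0 <= N)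
      by (apply Hpos, (coeffs_pos S hS G HG), Forall_forall, (Hnoneg G HinG)).
    specialize (Hsgn G HinG); rewrite HN, <- Z.mul_opp_r in Hsgn.
    apply sgn_mul_eq_iff in Hsgn; lia.
Qed.
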